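(* Let $M\in\mathrm{rep}\,G_{2,n}$ and $I\in\mathbb{I}_{2,n}$. Then exactly one of the following holds, and $\bar d^{ss}_M(I)$ is given by the corresponding formula. (a) $I$ is a rectangle with source $s$ and sink $t$: $\bar d^{ss}_M(I)=\operatorname{rank}M(s\to t)$. (b) $I=[b_1,d_1]_1\sqcup[b_2,d_2]_2$ with $b_2<b_1\le d_2=d_1$, so $I$ has sources $s_1=(1,b_1)$, $s_2=(2,b_2)$ and sink $t_2=(2,d_2)$: $$\bar d^{ss}_M(I)=\operatorname{rank}M(s_2\to t_2)+\operatorname{rank}M(s_1\to t_2)-\operatorname{rank}\begin{bmatrix}M(s_2\to t_2) & M(s_1\to t_2)\end{bmatrix}.$$ (c) $I=[b_1,d_1]_1\sqcup[b_2,d_2]_2$ with $b_2=b_1\le d_2<d_1$, so $I$ has source $s_1=(1,b_1)$ and sinks $t_1=(1,d_1)$, $t_2=(2,d_2)$: $$\bar d^{ss}_M(I)=\operatorname{rank}M(s_1\to t_2)+\operatorname{rank}M(s_1\to t_1)-\operatorname{rank}\begin{bmatrix}M(s_1\to t_2)\\ M(s_1\to t_1)\end{bmatrix}.$$ (d) $I=[b_1,d_1]_1\sqcup[b_2,d_2]_2$ with $b_2<b_1\le d_2<d_1$, so $I$ has sources $s_1=(1,b_1)$, $s_2=(2,b_2)$ and sinks $t_1=(1,d_1)$, $t_2=(2,d_2)$: $$\bar d^{ss}_M(I)=\operatorname{rank}\begin{bmatrix}M(s_2\to t_2) & M(s_1\to t_2)\\ 0 & M(s_1\to t_1)\end{bmatrix}+\operatorname{rank}M(s_1\to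 t_2)-\operatorname{rank}\begin{bmatrix}M(s_1\to t_2)\\ M(s_1\to t_1)\end{bmatrix}-\operatorname{rank}\begin{bmatrix}M(s_2\to t_2) & M(s_1\to t_2)\end{bmatrix}.$$ Here block matrices denote the linear maps $M(s_2)\oplus M(s_1)\to M(t_2)$, $M(s_1)\to M(t_2)\oplus M(t_1)$, and $M(s_2)\oplus M(s_1)\to M(t_2)\oplus M(t_1)$ respectively.
   Context: Fix a field $K$. $G_{2,n}$ is the equioriented commutative $2\times n$ grid: the quiver with vertex set $\{(i,j):1\le i\le 2,\ 1\le j\le n\}$ and arrows $(i,j)\to(i,j+1)$ and $(1,j)\to(2,j)$, bound by all commutativity relations; $\mathrm{rep}\,G_{2,n}$ is its category of finite-dimensional representations. For vertices $s,t$ with a path from $s$ to $t$, $M(s\to t)$ is the composite linear map along any such path. An interval of $G_{2,n}$ is a nonempty full subquiver $I$ which is connected (as an undirected graph) and convex (whenever $x,y\in I_0$ and there are paths $x\to z$, $z\to y$, then $z\in I_0$); $\mathbb{I}_{2,n}$ is the set of intervals. Every interval has staircase form $\bigsqcup_{i=s}^t[b_i,d_i]_i$ with vertex set $\{(i,x):s\le i\le t,\ b_i\le x\le d_i\}$, $1\le s\le t\le 2$ and $b_2\le b_1\le d_2\le d_1$ when $s=1,t=2$; a rectangle is an interval with one row, or with $b_1=b_2$ and $d_1=d_2$. The interval representation $V_I$ has $K$ on $I$, $0$ elsewhere, identity maps inside $I$, zero otherwise. $I^{ss}_0$ is the set of sources and sinks of the quiver $I$. $KG_{2,n}$ is the $K$-linear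 category whose objects are vertices and morphisms are $K$-linear combinations of paths modulo commutativity relations; $\mathcal{C}^{ss}_I$ is its full subcategory on $I^{ss}_0$, $M^{ss}_I:=M|_{\mathcal{C}^{ss}_I}$, and $\bar d^{ss}_M(I)$ is the multiplicity of the indecomposable $(V_I)^{ss}_I$ as a direct summand of $M^{ss}_I$. *)

From HB Require Import structures.
From mathcomp Require Import all_boot all_order all_algebra.
Set Implicit Arguments. Unset Strict Implicit. Unset Printing Implicit Defensive.
Import GRing.Theory.
Local Open Scope ring_scope.

(* Rows: the paper's row 1 is [grow1], row 2 is [grow2].
   Columns: the paper's column j (1 <= j <= n) is the ordinal j-1 : 'I_n. *)
Definition grow1 : 'I_2 := @Ordinal 2 0 isT.
Definition grow2 : 'I_2 := @Ordinal 2 1 isT.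

Definition vtx (n : nat) := ('I_2 * 'I_n)%type.

Definition arrow (n : nat) : rel (vtx n) := fun x y =>
  ((x.1 == y.1) && (nat_of_ord y.2 == (nat_of_ord x.2).+1)) ||
  [&& x.1 == grow1, y.1 == grow2 & x.2 == y.2].

Definition reach (n : nat) : rel (vtx n) := connect (@arrow n).

Definition is_interval (n : nat) (I : {set vtx n}) : Prop :=
  I != set0 /\
  (forall x y, x \in I -> y \in I ->
     connect (fun u v => [&& u \in I, v \in I & arrow u v || arrow v u]) x y) /\
  (forall x y z, x \in I -> y \in I -> reach x z -> reach z y -> z \in I).

Definition Iss (n : nat) (I : {set vtx n}) : {set vtx n} :=
  [set x in I | [forall y in I, ~~ arrow y x] || [forall y in I, ~~ arrow x y]].

Definition rowI (n : nat) (i : 'I_2) (b d : 'I_n) : {set vtx n} :=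
  [set x : vtx n | (x.1 == i) && (b <= x.2 <= d)%N].
Definition stair (n : nat) (b1 d1 b2 d2 : 'I_n) : {set vtx n} :=
  rowI grow1 b1 d1 :|: rowI grow2 b2 d2.

Definition is_rect (n : nat) (I : {set vtx n}) : Prop :=
  (exists (i : 'I_2) (b d : 'I_n), (b <= d)%N /\ I = rowI i b d) \/
  (exists b d : 'I_n, (b <= d)%N /\ I = stair b d b d).
Definition caseB (n : nat) (I : {set vtx n}) : Prop :=
  exists b1 d1 b2 d2 : 'I_n, [&& (b2 < b1)%N, (b1 <= d2)%N & d2 == d1] /\ I = stair b1 d1 b2 d2.
Definition caseC (n : nat) (I : {set vtx n}) : Prop :=
  exists b1 d1 b2 d2 : 'I_n, [&& b2 == b1, (b1 <= d2)%N & (d2 < d1)%N] /\ I = stair b1 d1 b2 d2.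
Definition caseD (n : nat) (I : {set vtx n}) : Prop :=
  exists b1 d1 b2 d2 : 'I_n, [&& (b2 < b1)%N, (b1 <= d2)%N & (d2 < d1)%N] /\ I = stair b1 d1 b2 d2.

Definition exactly_one4 (P Q R S : Prop) : Prop :=
  (P \/ Q \/ R \/ S) /\
  ~ (P /\ Q) /\ ~ (P /\ R) /\ ~ (P /\ S) /\ ~ (Q /\ R) /\ ~ (Q /\ S) /\ ~ (R /\ S).

(* Representations of G_{2,n} (column-vector convention: a linear map
   V -> W is a matrix 'M_(dim W, dim V)).  Dimensions are indexed by nat
   columns; data at columns >= n is irrelevant (never used). *)
Record grep (K : fieldType) (n : nat) := GRep {
  gdim : 'I_2 -> nat -> nat;
  hmap : forall (i : 'I_2) (j : nat), 'M[K]_(gdim i j.+1, gdim i j);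
  vmap : forall j : nat, 'M[K]_(gdim grow2 j, gdim grow1 j);
  gcomm : forall j : nat, (j.+1 < n)%N ->
            vmap j.+1 *m hmap grow1 j = hmap grow2 j *m vmap j
}.

Section Paths.
Variables (K : fieldType) (n : nat) (M : grep K n).

Fixpoint hcomp (i : 'I_2) (j k : nat) : 'M[K]_(gdim M i (k + j), gdim M i j) :=
  match k with
  | 0 => 1%:M
  | k'.+1 => hmap M i (k' + j) *m hcomp i j k'
  end.

(* M(x -> y): composite along a path from x to y (go right in row x.1,
   then down if needed); meaningful when reach x y. *)
Definition Mpath (x y : vtx n) : 'M[K]_(gdim M y.1 y.2, gdim M x.1 x.2) :=
  let k := (nat_of_ord y.2 - nat_of_ord x.2)%N in
  if x.1 == y.1 then conform_mx 0 (hcomp x.1 x.2 k)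
  else conform_mx 0 (vmap M (k + x.2) *m hcomp grow1 x.2 k).

Definition Mdim (x : vtx n) : nat := gdim M x.1 x.2.
End Paths.

(* Representations of the full subcategory of K G_{2,n} on a vertex set S:
   a space at each object and a map for each (class of) path x -> y,
   functorially. *)
Definition is_ssfunctor (K : fieldType) (n : nat) (S : {set vtx n})
  (d : vtx n -> nat) (f : forall x y : vtx n, 'M[K]_(d y, d x)) : Prop :=
  (forall x, x \in S -> f x x = 1%:M) /\
  (forall x y z, x \in S -> y \in S -> z \in S -> reach x y -> reach y z ->
     f y z *m f x y = f x z).

Definition ss_iso (K : fieldType) (n : nat) (S : {set vtx n})
  (d : vtx n -> nat) (f : forall x y : vtx n, 'M[K]_(d y, d x))
  (d' : vtx n -> nat) (f' : forall x y : vtx n, 'M[K]_(d' y, d' x)) : Prop :=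
  exists (phi : forall x, 'M[K]_(d' x, d x)) (psi : forall x, 'M[K]_(d x, d' x)),
    (forall x, x \in S -> phi x *m psi x = 1%:M /\ psi x *m phi x = 1%:M) /\
    (forall x y, x \in S -> y \in S -> reach x y -> phi y *m f x y = f' x y *m phi x).

(* ((V_I)^{ss}_I)^{⊕ m} is a direct summand of the representation (d,f) on
   S = I^{ss}_0 (S ⊆ I, so (V_I)^{ss}_I is K at each object of S with identity
   maps): (d,f) ≅ (V_I)^{ss,⊕m} ⊕ Y for some representation Y. *)
Definition pow_summand (K : fieldType) (n : nat) (S : {set vtx n})
  (d : vtx n -> nat) (f : forall x y : vtx n, 'M[K]_(d y, d x)) (m : nat) : Prop :=
  exists (dY : vtx n -> nat) (fY : forall x y : vtx n, 'M[K]_(dY y, dY x)),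
    is_ssfunctor S fY /\
    ss_iso S f (fun x y => block_mx (1%:M : 'M[K]_m) 0 0 (fY x y)).

(* \bar d^{ss}_M(I) = m : the multiplicity of (V_I)^{ss}_I as a direct summand
   of M^{ss}_I is m (largest power that is a direct summand). *)
Definition dbar_ss_is (K : fieldType) (n : nat) (M : grep K n) (I : {set vtx n}) (m : nat) : Prop :=
  pow_summand (Iss I) (Mpath M) m /\ ~ pow_summand (Iss I) (Mpath M) m.+1.

Definition dbar_ss_eq (K : fieldType) (n : nat) (M : grep K n) (I : {set vtx n}) (z : int) : Prop :=
  exists m : nat, dbar_ss_is M I m /\ (m%:Z = z).

(* The multiplicity of (V_I)^{ss}_I in M^{ss}_I is the largest k admitting natural
   maps i : K^k -> M^{ss}_I and p : M^{ss}_I -> K^k with p i = 1.  The sources and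
   sinks of an interval form a poset of height one, so such a pair is a family of
   vectors at the sources and covectors at the sinks, compatible along the arrows of
   that poset.  There are four shapes (one, two or three arrows in a line: segment,
   cospan, span, zigzag), and for each the largest k is computed by linear algebra:
   the rank of a map, dim (im A :&: im B), dim (coim B :&: coim C), and
   dim (im A :&: im B) - dim (im A :&: B (ker C)).  The dimension formula for sums of
   subspaces turns these into the rank expressions of the theorem. *)

From HB Require Import structures.
From mathcomp Require Import all_boot all_order all_algebra.
From mathcomp Require Import zify.
Import GRing.Theory.

Set Implicit Arguments. Unset Strict Implicit. Unset Printing Implicit Defensive.

Section Grid.
Variable n : nat.
Implicit Types (x y z : vtx n) (I J : {set vtx n}).

Lemma arrowE x y : arrow x y =
  ((x.1 == y.1 :> nat) && (y.2 == x.2.+1 :> nat)) ||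
  [&& x.1 == 0 :> nat, y.1 == 1 :> nat & x.2 == y.2 :> nat].
Proof. by []. Qed.

Lemma rowIE i b d x : (x \in rowI i b d) = (x.1 == i :> nat) && (b <= x.2 <= d).
Proof. by rewrite !inE. Qed.

Lemma stairE b1 d1 b2 d2 x : (x \in stair b1 d1 b2 d2) =
  (x.1 == 0 :> nat) && (b1 <= x.2 <= d1) || (x.1 == 1 :> nat) && (b2 <= x.2 <= d2).
Proof. by rewrite !inE. Qed.

Lemma ord2P (i : 'I_2) : i = grow1 \/ i = grow2.
Proof. by case: i => -[|[|//]] hi; [left | right]; apply: val_inj. Qed.

Lemma vtx_setP I J :
  (forall j, ((grow1, j) \in I) = ((grow1, j) \in J)) ->
  (forall j, ((grow2, j) \in I) = ((grow2, j) \in J)) -> I = J.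
Proof. by move=> e1 e2; apply/setP => -[i j]; case: (ord2P i) => ->. Qed.

Definition prev_col (j : 'I_n) : 'I_n := Ordinal (leq_ltn_trans (leq_pred j) (ltn_ord j)).
Definition next_col (j d : 'I_n) (lt_jd : j < d) : 'I_n := Ordinal (leq_ltn_trans lt_jd (ltn_ord d)).

Lemma reach_leq x y : reach x y -> (x.1 <= y.1) && (x.2 <= y.2).
Proof.
case/connectP => p + ->; elim: p x => [|z p IH] x /=; first by rewrite !leqnn.
case/andP => axz /IH; move: axz; rewrite arrowE.
move: (val x.1) (val x.2) (val z.1) (val z.2) (val (last z p).1) (val (last z p).2); lia.
Qed.

Lemma reach_row (i : 'I_2) (a c : 'I_n) : a <= c -> reach (i, a) (i, c).
Proof.
case: c => c; elim: c => [|c IH] ltcn /= ac.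
  have -> : a = Ordinal ltcn by apply: val_inj => /=; lia.
  exact: connect0.
have [ac' | ca] := boolP (a <= c).
  apply: connect_trans (IH (ltnW ltcn) ac') (connect1 _).
  by rewrite arrowE /= !eqxx.
have -> : a = Ordinal ltcn by apply: val_inj => /=; lia.
exact: connect0.
Qed.

Lemma reach_down (j : 'I_n) : reach (grow1, j) (grow2, j).
Proof. by apply: connect1; rewrite arrowE /= eqxx. Qed.

Lemma reach_row_down (a c : 'I_n) : a <= c -> reach (grow1, a) (grow2, c).
Proof. by move=> ac; apply: connect_trans (reach_row _ ac) (reach_down _). Qed.

Definition Isrc I := [set x in I | [forall y in I, ~~ arrow y x]].
Definition Isnk I := [set x in I | [forall y in I, ~~ arrow x y]].

Lemma IssE I : Iss I = Isrc I :|: Isnk I.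
Proof. by apply/setP => x; rewrite !inE andb_orr. Qed.

Lemma mem_Iss I x : x \in Iss I -> x \in I.
Proof. by rewrite inE => /andP[]. Qed.

Section Interval.
Variable I : {set vtx n}.
Hypothesis intI : is_interval I.

Lemma interval_convex x y z : x \in I -> y \in I -> reach x z -> reach z y -> z \in I.
Proof. by case: intI => _ [_]; apply. Qed.

Lemma interval_out_arrow x y : x \in I -> y \in I -> reach x y -> x != y ->
  exists2 z, z \in I & arrow x z.
Proof.
move=> xI yI /connectP[[|z p] /= pth ey] nxy; first by rewrite ey eqxx in nxy.
case/andP: pth => axz pz; exists z => //.
by apply: interval_convex xI yI (connect1 axz) _; rewrite ey; apply/connectP; exists p.
Qed.

Lemma interval_in_arrow x y : x \in I -> y \in I -> reach x y -> x != y ->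
  exists2 z, z \in I & arrow z y.
Proof.
move=> xI yI /connectP[p]; case/lastP: p => [|p z] /=; first by move=> _ ->; rewrite eqxx.
rewrite rcons_path last_rcons => /andP[pp azy] ey _; subst z.
exists (last x p) => //.
by apply: interval_convex xI yI _ (connect1 azy); apply/connectP; exists p.
Qed.

Lemma Isnk_reach x y : x \in Isnk I -> y \in I -> reach x y -> x = y.
Proof.
rewrite inE => /andP[xI /forall_inP noout] yI rxy; apply/eqP/negPn/negP => nxy.
have [z zI] := interval_out_arrow xI yI rxy nxy.
exact/negP/noout.
Qed.

Lemma Isrc_reach x y : x \in I -> y \in Isrc I -> reach x y -> x = y.
Proof.
rewrite inE => xI /andP[yI /forall_inP noin] rxy; apply/eqP/negPn/negP => nxy.
have [z zI] := interval_in_arrow xI yI rxy nxy.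
exact/negP/noin.
Qed.

Lemma Iss_reach x y : x \in Iss I -> y \in Iss I -> reach x y -> x != y ->
  x \in Isrc I /\ y \in Isnk I.
Proof.
move=> xS yS rxy nxy; have xI := mem_Iss xS; have yI := mem_Iss yS.
have x_not_snk : x \notin Isnk I by apply: contra nxy => /Isnk_reach/(_ yI rxy)/eqP.
have y_not_src : y \notin Isrc I by apply: contra nxy => /(Isrc_reach xI)/(_ rxy)/eqP.
move: xS yS; rewrite !IssE !in_setU (negbTE x_not_snk) (negbTE y_not_src) orbF /=.
by split.
Qed.

Lemma interval_row_range (i : 'I_2) (j0 : 'I_n) : (i, j0) \in I ->
  exists b d : 'I_n, b <= d /\ forall j : 'I_n, ((i, j) \in I) = (b <= j <= d).
Proof.
move=> j0I.
case: (@arg_minnP _ j0 (fun j => (i, j) \in I) val j0I) => b bI bmin.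
case: (@arg_maxnP _ j0 (fun j => (i, j) \in I) val j0I) => d dI dmax.
exists b, d; split=> [|j]; first exact: bmin.
apply/idP/idP => [jI | /andP[bj jd]]; first by rewrite bmin //=; apply: dmax.
by apply: interval_convex bI dI (reach_row _ bj) (reach_row _ jd).
Qed.

Lemma interval_rows_meet (j1 j2 : 'I_n) : (grow1, j1) \in I -> (grow2, j2) \in I ->
  exists j : 'I_n, ((grow1, j) \in I) && ((grow2, j) \in I).
Proof.
move=> x1I x2I; case: intI => _ [conn _].
case/connectP: (conn _ _ x1I x2I) => p.
elim: p j1 x1I => [|[i j] p IH] j1 x1I /=.
  by move=> _ /(congr1 (fun v : vtx n => val v.1)).
case/andP => /and3P[_ zI e] pz ey; case: (ord2P i) => ei; subst i.
  exact: IH zI pz ey.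
exists j1; rewrite x1I (_ : j1 = j) //; apply: val_inj.
by move: e; rewrite !arrowE /=; lia.
Qed.

End Interval.

Lemma interval_staircase I : is_interval I ->
  (exists (i : 'I_2) (b d : 'I_n), b <= d /\ I = rowI i b d) \/
  (exists b1 d1 b2 d2 : 'I_n, [/\ b2 <= b1, b1 <= d2, d2 <= d1 & I = stair b1 d1 b2 d2]).
Proof.
move=> intI; have [nonempty _] := intI.
case: (pickP [pred j | (grow1, j) \in I]) => [j1 r1 | e1];
case: (pickP [pred j | (grow2, j) \in I]) => [j2 r2 | e2] /=.
- right; have [b1 [d1 [bd1 E1]]] := interval_row_range intI r1.
  have [b2 [d2 [bd2 E2]]] := interval_row_range intI r2.
  have [j0 /andP[j1I j2I]] := interval_rows_meet intI r1 r2.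
  have b1d2 : b1 <= d2 by move: j1I j2I; rewrite E1 E2; lia.
  have b1I : (grow1, b1) \in I by rewrite E1 leqnn.
  have d2I : (grow2, d2) \in I by rewrite E2 leqnn bd2.
  have := interval_convex intI b1I d2I (reach_down _) (reach_row _ b1d2).
  have := interval_convex intI b1I d2I (reach_row _ b1d2) (reach_down _).
  rewrite E1 E2 => d2d1 b2b1.
  exists b1, d1, b2, d2; split; try lia.
  by apply: vtx_setP => j; rewrite stairE /= ?E1 ?E2 //= orbF.
- left; have [b [d [bd E]]] := interval_row_range intI r1.
  exists grow1, b, d; split=> //.
  by apply: vtx_setP => j; rewrite rowIE /= ?E //; apply: e2.
- left; have [b [d [bd E]]] := interval_row_range intI r2.
  exists grow2, b, d; split=> //.
  by apply: vtx_setP => j; rewrite rowIE /= ?E //; apply: e1.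
- case/set0Pn: nonempty => -[i j]; case: (ord2P i) => -> jI.
    by move: (e1 j); rewrite /= jI.
  by move: (e2 j); rewrite /= jI.
Qed.

Section StairSourcesSinks.
Variables (b1 d1 b2 d2 : 'I_n).
Hypotheses (b21 : b2 <= b1) (b1d2 : b1 <= d2) (d21 : d2 <= d1).

Lemma Isrc_stair x : (x \in Isrc (stair b1 d1 b2 d2)) =
  (x == (grow1, b1)) || (b2 < b1) && (x == (grow2, b2)).
Proof.
case: x => i j; have := ltn_ord i; rewrite inE stairE !xpair_eqE -!val_eqE /= => i2.
apply/andP/idP => [[jI /forall_inP noin] | src].
  have := noin (i, prev_col j); have := noin (grow1, j).
  by rewrite !stairE !arrowE /=; lia.
split; first lia.
by apply/forall_inP => -[i' j']; have := ltn_ord i'; rewrite stairE arrowE /=; lia.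
Qed.

Lemma Isnk_stair x : (x \in Isnk (stair b1 d1 b2 d2)) =
  (x == (grow2, d2)) || (d2 < d1) && (x == (grow1, d1)).
Proof.
case: x => i j; have := ltn_ord i; rewrite inE stairE !xpair_eqE -!val_eqE /= => i2.
apply/andP/idP => [[jI /forall_inP noout] | snk].
  have := noout (grow2, j); rewrite stairE arrowE /=.
  case: (ltnP j d1) => [jd1 | ?]; last lia.
  by have := noout (i, next_col jd1); rewrite stairE arrowE /=; lia.
split; first lia.
by apply/forall_inP => -[i' j']; have := ltn_ord i'; rewrite stairE arrowE /=; lia.
Qed.

End StairSourcesSinks.

Section RowSourcesSinks.
Variables (i0 : 'I_2) (b d : 'I_n).
Hypothesis bd : b <= d.

Lemma Isrc_rowI x : (x \in Isrc (rowI i0 b d)) = (x == (i0, b)).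
Proof.
case: x => i j; have := ltn_ord i; have := ltn_ord i0.
rewrite inE rowIE !xpair_eqE -!val_eqE /= => i02 i2.
apply/andP/idP => [[jI /forall_inP noin] | src].
  by have := noin (i, prev_col j); rewrite rowIE arrowE /=; lia.
split; first lia.
by apply/forall_inP => -[i' j']; have := ltn_ord i'; rewrite rowIE arrowE /=; lia.
Qed.

Lemma Isnk_rowI x : (x \in Isnk (rowI i0 b d)) = (x == (i0, d)).
Proof.
case: x => i j; have := ltn_ord i; have := ltn_ord i0.
rewrite inE rowIE !xpair_eqE -!val_eqE /= => i02 i2.
apply/andP/idP => [[jI /forall_inP noout] | snk].
  case: (ltnP j d) => [jd | ?]; last lia.
  by have := noout (i, next_col jd); rewrite rowIE arrowE /=; lia.
split; first lia.
by apply/forall_inP => -[i' j']; have := ltn_ord i'; rewrite rowIE arrowE /=; lia.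
Qed.

End RowSourcesSinks.

End Grid.

Section Cases.
Variable n : nat.
Implicit Types (I : {set vtx n}).

Lemma stair_inj (b1 d1 b2 d2 b1' d1' b2' d2' : 'I_n) :
  b2 <= b1 <= d2 -> d2 <= d1 -> b2' <= b1' <= d2' -> d2' <= d1' ->
  stair b1 d1 b2 d2 = stair b1' d1' b2' d2' -> [/\ b1 = b1', d1 = d1', b2 = b2' & d2 = d2'].
Proof.
move=> b_ch d21 b_ch' d21' e.
have m x : (x \in stair b1 d1 b2 d2) = (x \in stair b1' d1' b2' d2') by rewrite e.
have := m (grow1, b1); have := m (grow1, d1); have := m (grow2, b2); have := m (grow2, d2).
have := m (grow1, b1'); have := m (grow1, d1'); have := m (grow2, b2'); have := m (grow2, d2').
by rewrite !stairE /= => *; split; apply: ord_inj; lia.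
Qed.

Lemma rowI_neq_stair (i : 'I_2) (b d b1 d1 b2 d2 : 'I_n) :
  b2 <= b1 <= d2 -> d2 <= d1 -> rowI i b d <> stair b1 d1 b2 d2.
Proof.
move=> b_ch d21 e; have := ltn_ord i.
have := congr1 (fun J : {set vtx n} => ((grow1, b1) \in J) && ((grow2, b2) \in J)) e.
by rewrite /= !rowIE !stairE /=; lia.
Qed.

(* The four cases of the theorem are the four values of [(b2 < b1, d2 < d1)]. *)
Definition stair_kind I (k : bool * bool) :=
  exists b1 d1 b2 d2 : 'I_n,
    [/\ b2 <= b1 <= d2, d2 <= d1, (b2 < b1, d2 < d1) = k & I = stair b1 d1 b2 d2].

Lemma stair_kind_inj I k k' : stair_kind I k -> stair_kind I k' -> k = k'.
Proof.
case=> b1 [d1 [b2 [d2 [b_ch d21 <- ->]]]] [b1' [d1' [b2' [d2' [b_ch' d21' <-]]]]].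
by case/(stair_inj b_ch d21 b_ch' d21') => -> -> -> ->.
Qed.

Lemma rect_stair_kind I k : is_rect I -> stair_kind I k -> k = (false, false).
Proof.
case=> [[i [b [d [_ ->]]]] | [b [d [bd ->]]]] kI.
  by case: kI => b1 [d1 [b2 [d2 [b_ch d21 _ /(rowI_neq_stair b_ch d21)]]]].
by apply: stair_kind_inj kI _; exists b, d, b, d; rewrite !leqnn bd !ltnn.
Qed.

Lemma caseB_kind I : caseB I -> stair_kind I (true, false).
Proof.
case=> b1 [d1 [b2 [d2 [/and3P[b21 b1d2 /eqP ed] ->]]]]; subst d1.
by exists b1, d2, b2, d2; rewrite (ltnW b21) b1d2 b21 leqnn ltnn.
Qed.

Lemma caseC_kind I : caseC I -> stair_kind I (false, true).
Proof.
case=> b1 [d1 [b2 [d2 [/and3P[/eqP eb b1d2 d21] ->]]]]; subst b2.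
by exists b1, d1, b1, d2; rewrite leqnn b1d2 (ltnW d21) d21 ltnn.
Qed.

Lemma caseD_kind I : caseD I -> stair_kind I (true, true).
Proof.
case=> b1 [d1 [b2 [d2 [/and3P[b21 b1d2 d21] ->]]]].
by exists b1, d1, b2, d2; rewrite (ltnW b21) b1d2 (ltnW d21) b21 d21.
Qed.

Lemma interval_exactly_one_case I : is_interval I ->
  exactly_one4 (is_rect I) (caseB I) (caseC I) (caseD I).
Proof.
move=> intI; split.
  have ltn_of_neq (a b : 'I_n) : a != b -> a <= b -> a < b.
    by move=> ne le; rewrite ltn_neqAle le andbT.
  case: (interval_staircase intI) => [[i [b [d [bd ->]]]] | [b1 [d1 [b2 [d2 [b21 b1d2 d21 ->]]]]]].
    by left; left; exists i, b, d.
  have [eb|/ltn_of_neq/(_ b21) lt_b] := eqVneq b2 b1;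
  have [ed|/ltn_of_neq/(_ d21) lt_d] := eqVneq d2 d1; subst.
  - by left; right; exists b1, d1.
  - by right; right; left; exists b1, d1, b1, d2; rewrite eqxx b1d2 lt_d.
  - by right; left; exists b1, d1, b2, d1; rewrite lt_b b1d2 eqxx.
  - by right; right; right; exists b1, d1, b2, d2; rewrite lt_b b1d2 lt_d.
do !split.
- by case=> rI /caseB_kind /(rect_stair_kind rI).
- by case=> rI /caseC_kind /(rect_stair_kind rI).
- by case=> rI /caseD_kind /(rect_stair_kind rI).
- by case=> /caseB_kind kB /caseC_kind /(stair_kind_inj kB).
- by case=> /caseB_kind kB /caseD_kind /(stair_kind_inj kB).
- by case=> /caseC_kind kC /caseD_kind /(stair_kind_inj kC).
Qed.

End Cases.

Local Open Scope ring_scope.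

Section Idempotent.
Variables (K : fieldType) (m : nat) (E : 'M[K]_m).

Lemma row_base_factor : E *m pinvmx (row_base E) *m row_base E = E.
Proof. by rewrite mulmxKpV // eq_row_base. Qed.

Lemma idempotent_row_base : E *m E = E -> row_base E *m (E *m pinvmx (row_base E)) = 1%:M.
Proof.
move=> EE; apply: (row_free_inj (row_base_free E)); rewrite /= mul1mx -mulmxA row_base_factor.
have [D ->] : exists D, row_base E = D *m E by apply/submxP; rewrite eq_row_base.
by rewrite -mulmxA EE.
Qed.

End Idempotent.

Section NaturalSplit.
Variables (K : fieldType) (n : nat) (S : {set vtx n}) (d : vtx n -> nat)
  (f : forall x y : vtx n, 'M[K]_(d y, d x)).

Definition nat_split k (i : forall x, 'M[K]_(d x, k)) (p : forall x, 'M[K]_(k, d x)) :=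
  (forall x, x \in S -> p x *m i x = 1%:M) /\
  (forall x y, x \in S -> y \in S -> reach x y -> f x y *m i x = i y /\ p y *m f x y = p x).

Definition split_mult m :=
  (exists i p, @nat_split m i p) /\ (forall k i p, @nat_split k i p -> (k <= m)%N).

Lemma nat_split_of_pow_summand k : pow_summand S f k -> exists i p, @nat_split k i p.
Proof.
case=> dY [fY [_ [phi [psi [inv phi_nat]]]]].
exists (fun x => psi x *m col_mx 1%:M 0), (fun x => row_mx 1%:M 0 *m phi x); split.
  move=> x xS; have [phipsi _] := inv x xS.
  by rewrite mulmxA -(mulmxA _ (phi x)) phipsi mulmx1 mul_row_col mul1mx mul0mx addr0.
move=> x y xS yS rxy; split.
  have [phipsi _] := inv x xS; have [_ psiphi] := inv y yS.
  have -> : f x y = psi y *m block_mx 1%:M 0 0 (fY x y) *m phi x.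
    by rewrite -mulmxA -phi_nat // mulmxA psiphi mul1mx.
  by rewrite -!mulmxA (mulmxA (phi x)) phipsi mul1mx mul_block_col !mul1mx !mul0mx addr0 add0r mulmx0.
by rewrite -mulmxA phi_nat // mulmxA mul_row_block !mul1mx !mul0mx !addr0.
Qed.

Section Complement.
Variables (k : nat) (i : forall x, 'M[K]_(d x, k)) (p : forall x, 'M[K]_(k, d x)).
Hypotheses (fF : is_ssfunctor S f) (ip : nat_split i p).

(* The complement of the summand is the image of the idempotent [1 - i p]. *)
Let E x : 'M[K]_(d x) := 1%:M - i x *m p x.
Let R x := row_base (E x).
Let C x := E x *m pinvmx (R x).
Let fY x y : 'M[K]_(\rank (E y), \rank (E x)) := R y *m f x y *m C x.

Let pi x : x \in S -> p x *m i x = 1%:M. Proof. exact: ip.1. Qed.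

Let E_idem x : x \in S -> E x *m E x = E x.
Proof.
move=> xS; rewrite /E mulmxBl mul1mx mulmxBr mulmx1 -!mulmxA (mulmxA (p x)) pi //.
by rewrite mul1mx subrr subr0.
Qed.

Let R_i x : x \in S -> R x *m i x = 0.
Proof.
move=> xS; have [D ->] : exists D, R x = D *m E x by apply/submxP; rewrite eq_row_base.
by rewrite -mulmxA /E mulmxBl mul1mx -mulmxA pi // mulmx1 subrr mulmx0.
Qed.

Let p_C x : x \in S -> p x *m C x = 0.
Proof.
move=> xS; apply: (row_free_inj (row_base_free (E x))); rewrite /= -mulmxA.
by rewrite row_base_factor /E mulmxBr mulmx1 mulmxA pi // mul1mx subrr mul0mx.
Qed.

Let C_R x : C x *m R x = 1%:M - i x *m p x. Proof. exact: row_base_factor. Qed.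

Let R_C x : x \in S -> R x *m C x = 1%:M.
Proof. by move=> xS; apply: idempotent_row_base; apply: E_idem. Qed.

Let R_f x y : x \in S -> y \in S -> reach x y -> R y *m f x y *m C x *m R x = R y *m f x y.
Proof.
move=> xS yS rxy; have [fi _] := ip.2 x y xS yS rxy.
by rewrite -mulmxA C_R mulmxBr mulmx1 (mulmxA _ (i x)) -(mulmxA (R y)) fi R_i // mul0mx subr0.
Qed.

Let fY_functor : is_ssfunctor S fY.
Proof.
case: fF => f1 fM; split=> [x xS | x y z xS yS zS rxy ryz]; first by rewrite /fY f1 // mulmx1 R_C.
by rewrite /fY 2!mulmxA R_f // -(mulmxA (R z)) fM.
Qed.

Lemma pow_summand_of_nat_split : pow_summand S f k.
Proof.
exists (fun x => \rank (E x)), fY; split; first exact: fY_functor.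
exists (fun x => col_mx (p x) (R x)), (fun x => row_mx (i x) (C x)); split.
  move=> x xS; rewrite mul_col_row mul_row_col pi // R_i // p_C // R_C // C_R addrC subrK.
  by rewrite -scalar_mx_block.
move=> x y xS yS rxy; have [_ pf] := ip.2 x y xS yS rxy.
by rewrite mul_col_mx mul_block_col !mul1mx !mul0mx addr0 add0r pf /fY R_f.
Qed.

End Complement.
End NaturalSplit.

Section SplitLinearAlgebra.
Variable K : fieldType.

Lemma mxrank_factor a b (G : 'M[K]_(a, b)) :
  exists (P : 'M[K]_(\rank G, a)) (Q : 'M[K]_(b, \rank G)), P *m G *m Q = 1%:M.
Proof.
have /row_fullP[P PC] := col_base_full G; have /row_freeP[Q RQ] := row_base_free G.
exists P, Q; transitivity (P *m col_base G *m (row_base G *m Q)).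
  by rewrite [RHS]mulmxA -(mulmxA P (col_base G)) mulmx_base.
by rewrite PC RQ mul1mx.
Qed.

(* The row space of a transpose [A^T] is the image of [A]. *)
Lemma mulmx_tr_pinv m p r (A : 'M[K]_(m, p)) (V : 'M[K]_(r, m)) :
  (V <= A^T)%MS -> A *m (V *m pinvmx A^T)^T = V^T.
Proof. by move=> VA; rewrite -(trmxK (A *m _)) trmx_mul trmxK mulmxKpV. Qed.

Section Cospan.
Variables (t s2 s1 : nat) (A : 'M[K]_(t, s2)) (B : 'M[K]_(t, s1)).

Lemma mxrank_row_mx_cap : (\rank (row_mx A B) + \rank (A^T :&: B^T) = \rank A + \rank B)%N.
Proof.
by rewrite -mxrank_tr tr_row_mx -addsmxE mxrank_sum_cap !mxrank_tr.
Qed.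

Lemma cospan_mult_formula :
  (\rank (A^T :&: B^T))%:Z = (\rank A)%:Z + (\rank B)%:Z - (\rank (row_mx A B))%:Z.
Proof. by rewrite -PoszD -mxrank_row_mx_cap addnC PoszD addrK. Qed.

Lemma cospan_split_le k (i2 : 'M[K]_(s2, k)) (i1 : 'M[K]_(s1, k)) (q : 'M[K]_(k, t)) :
  A *m i2 = B *m i1 -> q *m (B *m i1) = 1%:M -> (k <= \rank (A^T :&: B^T))%N.
Proof.
move=> e qBi; have le_k : (k <= \rank (B *m i1))%N.
  by apply: (mulmx1_min_rank (M := q) (N := 1%:M)); rewrite mulmx1.
apply: leq_trans le_k _; rewrite -mxrank_tr mxrankS //.
by rewrite sub_capmx -{1}e !trmx_mul !submxMl.
Qed.

Lemma cospan_split_exists :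
  exists (i2 : 'M[K]_(s2, \rank (A^T :&: B^T))) (i1 : 'M[K]_(s1, _)) (q : 'M[K]_(_, t)),
    A *m i2 = B *m i1 /\ q *m (B *m i1) = 1%:M.
Proof.
set X := (A^T :&: B^T)%MS; have [P [Q PXQ]] := mxrank_factor X.
have PXA : (P *m X <= A^T)%MS := submx_trans (submxMl _ _) (capmxSl _ _).
have PXB : (P *m X <= B^T)%MS := submx_trans (submxMl _ _) (capmxSr _ _).
exists (P *m X *m pinvmx A^T)^T, (P *m X *m pinvmx B^T)^T, Q^T.
by rewrite !mulmx_tr_pinv //; split=> //; rewrite -trmx_mul PXQ trmx1.
Qed.

End Cospan.

Section Span.
Variables (s t2 t1 : nat) (B : 'M[K]_(t2, s)) (C : 'M[K]_(t1, s)).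

Lemma mxrank_col_mx_cap : (\rank (col_mx B C) + \rank (B :&: C) = \rank B + \rank C)%N.
Proof. by rewrite -addsmxE mxrank_sum_cap. Qed.

Lemma span_mult_formula :
  (\rank (B :&: C))%:Z = (\rank B)%:Z + (\rank C)%:Z - (\rank (col_mx B C))%:Z.
Proof. by rewrite -PoszD -mxrank_col_mx_cap addnC PoszD addrK. Qed.

Lemma span_split_le k (j : 'M[K]_(s, k)) (q2 : 'M[K]_(k, t2)) (q1 : 'M[K]_(k, t1)) :
  q2 *m B = q1 *m C -> q2 *m B *m j = 1%:M -> (k <= \rank (B :&: C))%N.
Proof.
move=> e qBj; have le_k : (k <= \rank (q2 *m B))%N.
  by apply: (mulmx1_min_rank (M := 1%:M) (N := j)); rewrite mul1mx.
by apply: leq_trans le_k _; rewrite mxrankS // sub_capmx {2}e !submxMl.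
Qed.

Lemma span_split_exists :
  exists (j : 'M[K]_(s, \rank (B :&: C))) (q2 : 'M[K]_(_, t2)) (q1 : 'M[K]_(_, t1)),
    q2 *m B = q1 *m C /\ q2 *m B *m j = 1%:M.
Proof.
set X := (B :&: C)%MS; have [P [Q PXQ]] := mxrank_factor X.
have PXB : (P *m X <= B)%MS := submx_trans (submxMl _ _) (capmxSl _ _).
have PXC : (P *m X <= C)%MS := submx_trans (submxMl _ _) (capmxSr _ _).
by exists Q, (P *m X *m pinvmx B), (P *m X *m pinvmx C); rewrite !mulmxKpV.
Qed.

End Span.

Section Zigzag.
Variables (s2 s1 t2 t1 : nat) (A : 'M[K]_(t2, s2)) (B : 'M[K]_(t2, s1)) (C : 'M[K]_(t1, s1)).

(* The row space of [zigzag_cap] is [im A :&: B (ker C)], inside [M(t2)]. *)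
Definition zigzag_cap := lsubmx (row_mx A^T (0 : 'M[K]_(s2, t1)) :&: row_mx B^T C^T)%MS.

Let X := (A^T :&: B^T)%MS.
Let U1 := row_mx A^T (0 : 'M[K]_(s2, t1)).
Let U2 := row_mx B^T C^T.
Let W := (U1 :&: U2)%MS.
Let Z := zigzag_cap.

Let W_row : W = row_mx Z 0.
Proof.
suff rW0 : rsubmx W = 0 by rewrite -rW0 hsubmxK.
have [D ->] : exists D, W = D *m U1 by apply/submxP; apply: capmxSl.
by rewrite mul_mx_row row_mxKr mulmx0.
Qed.

Let rank_Z : \rank Z = \rank W.
Proof. by rewrite W_row rank_row_mx0. Qed.

Let Z_sub_X : (Z <= X)%MS.
Proof.
have [D1 W1] : exists D, W = D *m U1 by apply/submxP; apply: capmxSl.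
have [D2 W2] : exists D, W = D *m U2 by apply/submxP; apply: capmxSr.
rewrite sub_capmx /Z /zigzag_cap -/U1 -/U2 -/W; apply/andP; split.
  by rewrite W1 mul_mx_row row_mxKl submxMl.
by rewrite W2 mul_mx_row row_mxKl submxMl.
Qed.

Let Z_ker (v : 'rV[K]_t2) : (v <= Z)%MS -> exists y : 'rV[K]_s1, v = y *m B^T /\ y *m C^T = 0.
Proof.
case/submxP=> e ->; have /submxP[y] : (e *m W <= U2)%MS.
  exact: submx_trans (submxMl _ _) (capmxSr _ _).
by rewrite W_row mul_mx_row mulmx0 mul_mx_row => /eq_row_mx[-> /esym yC]; exists y.
Qed.

Let sub_Z (v : 'rV[K]_t2) : (v <= A^T)%MS -> (row_mx v 0 <= U2)%MS -> (v <= Z)%MS.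
Proof.
case/submxP=> D -> vU2; have /submxP[e] : (row_mx (D *m A^T) 0 <= W)%MS.
  by rewrite sub_capmx vU2 andbT -(mulmx0 _ D) -mul_mx_row submxMl.
by move/(congr1 lsubmx); rewrite row_mxKl W_row mul_mx_row row_mxKl => ->; apply: submxMl.
Qed.

Lemma mxrank_block_mx_cap :
  (\rank (block_mx A B 0 C) + \rank zigzag_cap = \rank A + \rank (col_mx B C))%N.
Proof.
rewrite -/Z rank_Z -mxrank_tr tr_block_mx trmx0 block_mxEv -addsmxE.
by rewrite mxrank_sum_cap rank_row_mx0 mxrank_tr -tr_col_mx mxrank_tr.
Qed.

Lemma zigzag_cap_le : (\rank zigzag_cap <= \rank (A^T :&: B^T))%N.
Proof. exact: mxrankS Z_sub_X. Qed.

Lemma zigzag_mult_formula :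
  (\rank (A^T :&: B^T) - \rank zigzag_cap)%:Z =
  (\rank (block_mx A B 0 C))%:Z + (\rank B)%:Z - (\rank (col_mx B C))%:Z
    - (\rank (row_mx A B))%:Z.
Proof.
have := mxrank_block_mx_cap; have := mxrank_row_mx_cap A B; have := zigzag_cap_le.
move: (\rank (block_mx A B 0 C)) (\rank zigzag_cap) (\rank A) (\rank B) (\rank (col_mx B C))
  (\rank (row_mx A B)) (\rank (A^T :&: B^T)) => blk z a b col row x; lia.
Qed.

Lemma zigzag_split_le k (i2 : 'M[K]_(s2, k)) (i1 : 'M[K]_(s1, k)) (q2 : 'M[K]_(k, t2))
    (q1 : 'M[K]_(k, t1)) :
  A *m i2 = B *m i1 -> q2 *m B = q1 *m C -> q2 *m (B *m i1) = 1%:M ->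
  (k + \rank zigzag_cap <= \rank (A^T :&: B^T))%N.
Proof.
move=> e1 e2 qBi; pose V := (B *m i1)^T.
have le_k : (k <= \rank V)%N.
  by rewrite mxrank_tr; apply: (mulmx1_min_rank (M := q2) (N := 1%:M)); rewrite mulmx1.
have VX : (V <= X)%MS by rewrite sub_capmx /V -{1}e1 !trmx_mul !submxMl.
(* [q2^T] fixes [V] (by [qBi]) and kills [Z] (by [e2]), so [V :&: Z = 0]. *)
have VZ0 : (V :&: Z)%MS = 0.
  apply/eqP/rowV0P => v; rewrite sub_capmx => /andP[/submxP[u def_v] /Z_ker[y [vB yC]]].
  have vq_u : v *m q2^T = u by rewrite def_v /V -mulmxA -trmx_mul qBi trmx1 mulmx1.
  have vq_0 : v *m q2^T = 0.
    by rewrite vB -mulmxA -trmx_mul e2 trmx_mul mulmxA yC mul0mx.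
  by rewrite def_v -vq_u vq_0 mul0mx.
apply: leq_trans (leq_add le_k (leqnn _)) _.
by rewrite -mxrank_disjoint_sum // mxrankS // addsmx_sub VX Z_sub_X.
Qed.

Lemma zigzag_split_exists :
  exists (i2 : 'M[K]_(s2, \rank (A^T :&: B^T) - \rank zigzag_cap)) (i1 : 'M[K]_(s1, _))
         (q2 : 'M[K]_(_, t2)) (q1 : 'M[K]_(_, t1)),
    [/\ A *m i2 = B *m i1, q2 *m B = q1 *m C & q2 *m (B *m i1) = 1%:M].
Proof.
rewrite -/X -/Z; pose Y := (X :\: Z)%MS.
have YX : (Y <= X)%MS := diffmxSl X Z.
have rank_Y : \rank Y = (\rank X - \rank Z)%N.
  by rewrite -(mxrank_cap_compl X Z) (capmx_idPr Z_sub_X) addKn.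
(* Reducing [row_mx Y 0] modulo the row space of [U2] loses no rank, as [Y :&: Z = 0]. *)
pose G := row_mx Y (0 : 'M_(t2, t1)) *m cokermx U2.
have rank_G : \rank G = \rank Y.
  rewrite /G -(rank_row_mx0 t1 Y); apply/mxrank_injP/rowV0P => v.
  rewrite sub_capmx sub_kermx -submxE => /andP[/submxP[u ->]].
  rewrite mul_mx_row mulmx0 => uYU2.
  have uYZ : (u *m Y <= Z)%MS.
    apply: sub_Z uYU2; exact: submx_trans (submxMl _ _) (submx_trans YX (capmxSl _ _)).
  have : (u *m Y <= Y :&: Z)%MS by rewrite sub_capmx submxMl uYZ.
  by rewrite capmx_diff submx0 => /eqP->; rewrite row_mx0.
rewrite -rank_Y -rank_G; have [P [Q PGQ]] := mxrank_factor G.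
have PYA : (P *m Y <= A^T)%MS.
  exact: submx_trans (submxMl _ _) (submx_trans YX (capmxSl _ _)).
have PYB : (P *m Y <= B^T)%MS.
  exact: submx_trans (submxMl _ _) (submx_trans YX (capmxSr _ _)).
pose T := cokermx U2 *m Q.
exists (P *m Y *m pinvmx A^T)^T, (P *m Y *m pinvmx B^T)^T, (usubmx T)^T, (- (dsubmx T)^T).
rewrite !mulmx_tr_pinv //; split=> //.
  have /eqP : U2 *m T = 0 by rewrite /T mulmxA mulmx_coker mul0mx.
  rewrite -[T]vsubmxK mul_row_col addr_eq0 => /eqP UT.
  by rewrite mulNmx -[B]trmxK -[C]trmxK -!trmx_mul col_mxKu col_mxKd UT linearN.
rewrite -trmx_mul -[1%:M]trmx1 -PGQ; congr trmx.
by rewrite /G -[RHS]mulmxA -(mulmxA (row_mx Y 0)) -/T -{2}[T]vsubmxK mul_row_col mul0mx addr0 mulmxA.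
Qed.

End Zigzag.
End SplitLinearAlgebra.

Section Shapes.
Variables (K : fieldType) (n : nat) (S : {set vtx n}) (d : vtx n -> nat)
  (f : forall x y : vtx n, 'M[K]_(d y, d x)).
Hypothesis fF : is_ssfunctor S f.

Let f1 x : x \in S -> f x x = 1%:M. Proof. by case: fF => + _; apply. Qed.

Let fM x y z : x \in S -> y \in S -> z \in S -> reach x y -> reach y z ->
  f y z *m f x y = f x z.
Proof. by case: fF => _; apply. Qed.

Lemma nat_split_off_diag k (i : forall x, 'M[K]_(d x, k)) (p : forall x, 'M[K]_(k, d x)) :
  (forall x, x \in S -> p x *m i x = 1%:M) ->
  (forall x y, x \in S -> y \in S -> reach x y -> x != y ->
     f x y *m i x = i y /\ p y *m f x y = p x) ->
  nat_split S f i p.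
Proof.
move=> pi hnat; split=> // x y xS yS rxy; have [<-|nxy] := eqVneq x y; last exact: hnat.
by rewrite f1 // mul1mx mulmx1.
Qed.

Lemma split_mult_segment s t : s \in S -> t \in S ->
  (forall x, x \in S -> x = s \/ x = t) -> reach s t ->
  split_mult S f (\rank (f s t)).
Proof.
move=> sS tS memS rst.
have r_s x : x \in S -> reach s x by case/memS => ->; [apply: connect0 | apply: rst].
have r_t x : x \in S -> reach x t by case/memS => ->; [apply: rst | apply: connect0].
split=> [|k i p [pi hnat]].
  have [P [Q PfQ]] := mxrank_factor (f s t).
  exists (fun x => f s x *m Q), (fun x => P *m f x t); split.
    by move=> x xS; rewrite mulmxA -(mulmxA P) fM ?r_s ?r_t.
  move=> x y xS yS rxy; split; first by rewrite mulmxA fM ?r_s.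
  by rewrite -mulmxA fM ?r_t.
have [_ ft] := hnat s t sS tS rst.
by apply: (mulmx1_min_rank (M := p t) (N := i s)); rewrite ft pi.
Qed.

Lemma split_mult_cospan s1 s2 t : s1 \in S -> s2 \in S -> t \in S ->
  (forall x, x \in S -> [\/ x = s1, x = s2 | x = t]) ->
  (forall x y, x \in S -> y \in S -> reach x y -> x != y -> y = t) ->
  uniq [:: s1; s2; t] -> reach s1 t -> reach s2 t ->
  split_mult S f (\rank ((f s2 t)^T :&: (f s1 t)^T)).
Proof.
move=> s1S s2S tS memS to_t + r1t r2t.
rewrite /= !inE !negb_or => /and3P[/andP[s12 _] s2t _].
split=> [|k i p [pi hnat]].
  have [i2 [i1 [q [e qBi]]]] := cospan_split_exists (f s2 t) (f s1 t).
  pose i := dfwith (fun x => f s1 x *m i1) i2.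
  have i_s1 : i s1 = i1 by rewrite /i dfwith_out 1?eq_sym // f1 // mul1mx.
  have i_s2 : i s2 = i2 by rewrite /i dfwith_in.
  have i_t : i t = f s1 t *m i1 by rewrite /i dfwith_out.
  exists i, (fun x => q *m f x t); apply: nat_split_off_diag.
    move=> x /memS[]->.
    - by rewrite i_s1 -mulmxA.
    - by rewrite i_s2 -mulmxA e.
    - by rewrite i_t f1 // mulmx1.
  move=> x y xS yS rxy nxy; have yt := to_t x y xS yS rxy nxy; subst y.
  rewrite f1 // mulmx1; split=> //.
  by case/memS: xS nxy => ->; rewrite ?eqxx // ?i_s1 ?i_s2 ?i_t.
have [e1 _] := hnat s1 t s1S tS r1t; have [e2 _] := hnat s2 t s2S tS r2t.
apply: (cospan_split_le (i2 := i s2) (i1 := i s1) (q := p t)); first by rewrite e1 e2.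
by rewrite e1 pi.
Qed.

Lemma split_mult_span s t1 t2 : s \in S -> t1 \in S -> t2 \in S ->
  (forall x, x \in S -> [\/ x = s, x = t1 | x = t2]) ->
  (forall x y, x \in S -> y \in S -> reach x y -> x != y -> x = s) ->
  uniq [:: s; t1; t2] -> reach s t1 -> reach s t2 ->
  split_mult S f (\rank (f s t2 :&: f s t1)).
Proof.
move=> sS t1S t2S memS from_s + rs1 rs2.
rewrite /= !inE !negb_or => /and3P[/andP[st1 _] t12 _].
split=> [|k i p [pi hnat]].
  have [j [q2 [q1 [e qBj]]]] := span_split_exists (f s t2) (f s t1).
  pose p := dfwith (fun x => q2 *m f x t2) q1.
  have p_s : p s = q2 *m f s t2 by rewrite /p dfwith_out 1?eq_sym.
  have p_t1 : p t1 = q1 by rewrite /p dfwith_in.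
  have p_t2 : p t2 = q2 by rewrite /p dfwith_out // f1 // mulmx1.
  exists (fun x => f s x *m j), p; apply: nat_split_off_diag.
    move=> x /memS[]->.
    - by rewrite p_s f1 // mul1mx.
    - by rewrite p_t1 mulmxA -e.
    - by rewrite p_t2 mulmxA.
  move=> x y xS yS rxy nxy; have xs := from_s x y xS yS rxy nxy; subst x.
  rewrite f1 // mul1mx; split=> //.
  by case/memS: yS nxy => ->; rewrite ?eqxx // p_s ?p_t1 ?p_t2.
have [_ f1s] := hnat s t1 sS t1S rs1; have [_ f2s] := hnat s t2 sS t2S rs2.
apply: (span_split_le (j := i s) (q2 := p t2) (q1 := p t1)); first by rewrite f1s f2s.
by rewrite f2s pi.
Qed.

Section Zigzag.
Variables s1 s2 t1 t2 : vtx n.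
Hypotheses (s1S : s1 \in S) (s2S : s2 \in S) (t1S : t1 \in S) (t2S : t2 \in S).
Hypothesis memS : forall x, x \in S -> [\/ x = s1, x = s2, x = t1 | x = t2].
Hypothesis reachS : forall x y, x \in S -> y \in S -> reach x y -> x != y ->
  [\/ x = s2 /\ y = t2, x = s1 /\ y = t2 | x = s1 /\ y = t1].
Hypothesis uniq_st : uniq [:: s1; s2; t1; t2].
Hypotheses (r22 : reach s2 t2) (r12 : reach s1 t2) (r11 : reach s1 t1).

Lemma zigzag_nat_split k (i2 : 'M[K]_(d s2, k)) (i1 : 'M[K]_(d s1, k))
    (q2 : 'M[K]_(k, d t2)) (q1 : 'M[K]_(k, d t1)) :
  f s2 t2 *m i2 = f s1 t2 *m i1 -> q2 *m f s1 t2 = q1 *m f s1 t1 ->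
  q2 *m (f s1 t2 *m i1) = 1%:M ->
  exists (i : forall x, 'M[K]_(d x, k)) p, nat_split S f i p.
Proof.
move: uniq_st; rewrite /= !inE !negb_or => /and4P[/and3P[s12 s1t1 s1t2] /andP[s2t1 s2t2] t12 _].
move=> e1 e2 qBi; pose i := dfwith (fun x => f s1 x *m i1) i2.
pose p := dfwith (fun x => q2 *m f x t2) q1.
have i_s1 : i s1 = i1 by rewrite /i dfwith_out 1?eq_sym // f1 // mul1mx.
have i_s2 : i s2 = i2 by rewrite /i dfwith_in.
have i_t1 : i t1 = f s1 t1 *m i1 by rewrite /i dfwith_out.
have i_t2 : i t2 = f s1 t2 *m i1 by rewrite /i dfwith_out.
have p_s1 : p s1 = q2 *m f s1 t2 by rewrite /p dfwith_out 1?eq_sym.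
have p_s2 : p s2 = q2 *m f s2 t2 by rewrite /p dfwith_out 1?eq_sym.
have p_t1 : p t1 = q1 by rewrite /p dfwith_in.
have p_t2 : p t2 = q2 by rewrite /p dfwith_out // f1 // mulmx1.
exists i, p; apply: nat_split_off_diag.
  move=> x /memS[]->.
  - by rewrite p_s1 i_s1 -mulmxA.
  - by rewrite p_s2 i_s2 -mulmxA e1.
  - by rewrite p_t1 i_t1 mulmxA -e2 -mulmxA.
  - by rewrite p_t2 i_t2.
move=> x y xS yS rxy nxy; case: (reachS xS yS rxy nxy) => -[-> ->].
- by rewrite i_s2 i_t2 p_t2 p_s2 e1.
- by rewrite i_s1 i_t2 p_t2 p_s1.
- by rewrite i_s1 i_t1 p_t1 p_s1 e2.
Qed.

Lemma split_mult_zigzag :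
  split_mult S f (\rank ((f s2 t2)^T :&: (f s1 t2)^T)
                  - \rank (zigzag_cap (f s2 t2) (f s1 t2) (f s1 t1))).
Proof.
split=> [|k i p [pi hnat]].
  have [i2 [i1 [q2 [q1 [e1 e2 qBi]]]]] := zigzag_split_exists (f s2 t2) (f s1 t2) (f s1 t1).
  exact: zigzag_nat_split e1 e2 qBi.
have [e22 _] := hnat s2 t2 s2S t2S r22; have [e12 f12] := hnat s1 t2 s1S t2S r12.
have [_ f11] := hnat s1 t1 s1S t1S r11.
rewrite leq_subRL ?zigzag_cap_le // addnC.
apply: (zigzag_split_le (i2 := i s2) (i1 := i s1) (q2 := p t2) (q1 := p t1)).
- by rewrite e22 e12.
- by rewrite f12 f11.
- by rewrite e12 pi.
Qed.

End Zigzag.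

End Shapes.

Section Multiplicities.
Variables (K : fieldType) (n : nat) (M : grep K n).

Lemma Mpath_id (x : vtx n) : Mpath M x x = 1%:M.
Proof.
rewrite /Mpath eqxx; move: (x.2 - x.2)%N (subnn x.2) => k ->.
by rewrite /= conform_mx_id.
Qed.

Lemma Mpath_ssfunctor I : is_interval I -> is_ssfunctor (Iss I) (Mpath M).
Proof.
move=> intI; split=> [x _ | x y z xS yS zS rxy ryz]; first exact: Mpath_id.
have [<-|nxy] := eqVneq x y; first by rewrite Mpath_id mulmx1.
have [_ ysnk] := Iss_reach intI xS yS rxy nxy.
by rewrite -(Isnk_reach intI ysnk (mem_Iss zS) ryz) Mpath_id mul1mx.
Qed.

Lemma dbar_ss_eq_of_split_mult I m :
  is_interval I -> split_mult (Iss I) (Mpath M) m -> dbar_ss_eq M I m%:Z.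
Proof.
move=> intI [[i [p ip]] maxm]; exists m; split=> //; split.
  exact: pow_summand_of_nat_split (Mpath_ssfunctor intI) ip.
by case/nat_split_of_pow_summand => i' [p' /maxm]; rewrite ltnn.
Qed.

Lemma dbar_rowI (i : 'I_2) (b d : 'I_n) : (b <= d)%N -> is_interval (rowI i b d) ->
  dbar_ss_eq M (rowI i b d) (\rank (Mpath M (i, b) (i, d)))%:Z.
Proof.
move=> bd intI; apply: (dbar_ss_eq_of_split_mult intI).
have memS x : (x \in Iss (rowI i b d)) = (x == (i, b)) || (x == (i, d)).
  by rewrite IssE in_setU Isrc_rowI // Isnk_rowI.
apply: (split_mult_segment (Mpath_ssfunctor intI) _ _ _ (reach_row _ bd)).
- by rewrite memS eqxx.
- by rewrite memS eqxx orbT.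
- by move=> x; rewrite memS => /orP[]/eqP->; [left | right].
Qed.

Lemma dbar_stair_rect (b d : 'I_n) : (b <= d)%N -> is_interval (stair b d b d) ->
  dbar_ss_eq M (stair b d b d) (\rank (Mpath M (grow1, b) (grow2, d)))%:Z.
Proof.
move=> bd intI; apply: (dbar_ss_eq_of_split_mult intI).
have memS x : (x \in Iss (stair b d b d)) = (x == (grow1, b)) || (x == (grow2, d)).
  by rewrite IssE in_setU Isrc_stair // Isnk_stair // !ltnn !orbF.
apply: (split_mult_segment (Mpath_ssfunctor intI) _ _ _ (reach_row_down bd)).
- by rewrite memS eqxx.
- by rewrite memS eqxx orbT.
- by move=> x; rewrite memS => /orP[]/eqP->; [left | right].
Qed.

Lemma dbar_stair_cospan (b1 b2 d : 'I_n) :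
  (b2 < b1)%N -> (b1 <= d)%N -> is_interval (stair b1 d b2 d) ->
  let s1 := (grow1, b1) in let s2 := (grow2, b2) in let t := (grow2, d) in
  dbar_ss_eq M (stair b1 d b2 d)
    ((\rank (Mpath M s2 t))%:Z + (\rank (Mpath M s1 t))%:Z
     - (\rank (row_mx (Mpath M s2 t) (Mpath M s1 t)))%:Z).
Proof.
move=> b21 b1d intI s1 s2 t; rewrite -cospan_mult_formula.
apply: (dbar_ss_eq_of_split_mult intI); have b2d := leq_trans (ltnW b21) b1d.
have srcE x : (x \in Isrc (stair b1 d b2 d)) = (x == s1) || (x == s2).
  by rewrite Isrc_stair ?(ltnW b21) // b21.
have snkE x : (x \in Isnk (stair b1 d b2 d)) = (x == t).
  by rewrite Isnk_stair ?(ltnW b21) // ltnn orbF.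
have memS x : (x \in Iss (stair b1 d b2 d)) = [|| x == s1, x == s2 | x == t].
  by rewrite IssE in_setU srcE snkE orbA.
apply: (split_mult_cospan (Mpath_ssfunctor intI) _ _ _ _ _ _ (reach_row_down b1d) (reach_row _ b2d)).
- by rewrite memS eqxx.
- by rewrite memS eqxx orbT.
- by rewrite memS eqxx !orbT.
- by move=> x; rewrite memS => /or3P[]/eqP->; [apply: Or31 | apply: Or32 | apply: Or33].
- move=> x y xS yS rxy nxy; have [_] := Iss_reach intI xS yS rxy nxy.
  by rewrite snkE => /eqP.
- by rewrite /= !inE !xpair_eqE -!val_eqE /=; lia.
Qed.

Lemma dbar_stair_span (b d2 d1 : 'I_n) :
  (b <= d2)%N -> (d2 < d1)%N -> is_interval (stair b d1 b d2) ->
  let s := (grow1, b) in let t1 := (grow1, d1) in let t2 := (grow2, d2) in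
  dbar_ss_eq M (stair b d1 b d2)
    ((\rank (Mpath M s t2))%:Z + (\rank (Mpath M s t1))%:Z
     - (\rank (col_mx (Mpath M s t2) (Mpath M s t1)))%:Z).
Proof.
move=> bd2 d21 intI s t1 t2; rewrite -span_mult_formula.
apply: (dbar_ss_eq_of_split_mult intI); have bd1 := leq_trans bd2 (ltnW d21).
have srcE x : (x \in Isrc (stair b d1 b d2)) = (x == s).
  by rewrite Isrc_stair ?(ltnW d21) // ltnn orbF.
have snkE x : (x \in Isnk (stair b d1 b d2)) = (x == t2) || (x == t1).
  by rewrite Isnk_stair ?(ltnW d21) // d21.
have memS x : (x \in Iss (stair b d1 b d2)) = [|| x == s, x == t1 | x == t2].
  by rewrite IssE in_setU srcE snkE (orbC (x == t2)).
apply: (split_mult_span (Mpath_ssfunctor intI) _ _ _ _ _ _ (reach_row _ bd1) (reach_row_down bd2)).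
- by rewrite memS eqxx.
- by rewrite memS eqxx orbT.
- by rewrite memS eqxx !orbT.
- by move=> x; rewrite memS => /or3P[]/eqP->; [apply: Or31 | apply: Or32 | apply: Or33].
- move=> x y xS yS rxy nxy; have [] := Iss_reach intI xS yS rxy nxy.
  by rewrite srcE => /eqP.
- by rewrite /= !inE !xpair_eqE -!val_eqE /=; lia.
Qed.

Lemma dbar_stair_zigzag (b1 d1 b2 d2 : 'I_n) :
  (b2 < b1)%N -> (b1 <= d2)%N -> (d2 < d1)%N -> is_interval (stair b1 d1 b2 d2) ->
  let s1 := (grow1, b1) in let s2 := (grow2, b2) in
  let t1 := (grow1, d1) in let t2 := (grow2, d2) in
  dbar_ss_eq M (stair b1 d1 b2 d2)
    ((\rank (block_mx (Mpath M s2 t2) (Mpath M s1 t2) 0 (Mpath M s1 t1)))%:Z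
     + (\rank (Mpath M s1 t2))%:Z
     - (\rank (col_mx (Mpath M s1 t2) (Mpath M s1 t1)))%:Z
     - (\rank (row_mx (Mpath M s2 t2) (Mpath M s1 t2)))%:Z).
Proof.
move=> b21 b1d2 d21 intI s1 s2 t1 t2; rewrite -zigzag_mult_formula.
apply: (dbar_ss_eq_of_split_mult intI).
have [b21' d21'] := (ltnW b21, ltnW d21).
have srcE x : (x \in Isrc (stair b1 d1 b2 d2)) = (x == s1) || (x == s2).
  by rewrite Isrc_stair // b21.
have snkE x : (x \in Isnk (stair b1 d1 b2 d2)) = (x == t2) || (x == t1).
  by rewrite Isnk_stair // d21.
have memS x : (x \in Iss (stair b1 d1 b2 d2)) = [|| x == s1, x == s2, x == t1 | x == t2].
  by rewrite IssE in_setU srcE snkE -!orbA (orbC (x == t2)).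
apply: (split_mult_zigzag (Mpath_ssfunctor intI) _ _ _ _ _ _ _
  (reach_row _ (leq_trans b21' b1d2)) (reach_row_down b1d2) (reach_row _ (leq_trans b1d2 d21'))).
- by rewrite memS eqxx.
- by rewrite memS eqxx orbT.
- by rewrite memS eqxx !orbT.
- by rewrite memS eqxx !orbT.
- by move=> x; rewrite memS => /or4P[]/eqP->;
    [apply: Or41 | apply: Or42 | apply: Or43 | apply: Or44].
- move=> x y xS yS rxy nxy; have [] := Iss_reach intI xS yS rxy nxy.
  move: rxy; rewrite srcE snkE => rxy /orP[]/eqP xs /orP[]/eqP yt; subst x y.
  + by apply: Or32.
  + by apply: Or33.
  + by apply: Or31.
  + by move/reach_leq: rxy.
- by rewrite /= !inE !xpair_eqE -!val_eqE /=; lia.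
Qed.

End Multiplicities.

Unset Implicit Arguments.

Theorem mainTheorem20 (K : fieldType) (n : nat) (M : grep K n) (I : {set vtx n}) :
  is_interval I ->
  exactly_one4 (is_rect I) (caseB I) (caseC I) (caseD I) /\
  (forall (i : 'I_2) (b d : 'I_n), (b <= d)%N -> I = rowI i b d ->
     dbar_ss_eq M I (\rank (Mpath M (i, b) (i, d)))%:Z) /\
  (forall b d : 'I_n, (b <= d)%N -> I = stair b d b d ->
     dbar_ss_eq M I (\rank (Mpath M (grow1, b) (grow2, d)))%:Z) /\
  (forall b1 d1 b2 d2 : 'I_n, [&& (b2 < b1)%N, (b1 <= d2)%N & d2 == d1] ->
     I = stair b1 d1 b2 d2 ->
     let s1 := (grow1, b1) in let s2 := (grow2, b2) in let t2 := (grow2, d2) in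
     dbar_ss_eq M I ((\rank (Mpath M s2 t2))%:Z + (\rank (Mpath M s1 t2))%:Z
                     - (\rank (row_mx (Mpath M s2 t2) (Mpath M s1 t2)))%:Z)) /\
  (forall b1 d1 b2 d2 : 'I_n, [&& b2 == b1, (b1 <= d2)%N & (d2 < d1)%N] ->
     I = stair b1 d1 b2 d2 ->
     let s1 := (grow1, b1) in let t1 := (grow1, d1) in let t2 := (grow2, d2) in
     dbar_ss_eq M I ((\rank (Mpath M s1 t2))%:Z + (\rank (Mpath M s1 t1))%:Z
                     - (\rank (col_mx (Mpath M s1 t2) (Mpath M s1 t1)))%:Z)) /\
  (forall b1 d1 b2 d2 : 'I_n, [&& (b2 < b1)%N, (b1 <= d2)%N & (d2 < d1)%N] ->
     I = stair b1 d1 b2 d2 ->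
     let s1 := (grow1, b1) in let s2 := (grow2, b2) in
     let t1 := (grow1, d1) in let t2 := (grow2, d2) in
     dbar_ss_eq M I
       ((\rank (block_mx (Mpath M s2 t2) (Mpath M s1 t2) 0 (Mpath M s1 t1)))%:Z
        + (\rank (Mpath M s1 t2))%:Z
        - (\rank (col_mx (Mpath M s1 t2) (Mpath M s1 t1)))%:Z
        - (\rank (row_mx (Mpath M s2 t2) (Mpath M s1 t2)))%:Z)).
Proof.
move=> intI; split; first exact: interval_exactly_one_case.
split; first by move=> i b d bd eI; subst I; exact: dbar_rowI.
split; first by move=> b d bd eI; subst I; exact: dbar_stair_rect.
split.
  move=> b1 d1 b2 d2 /and3P[b21 b1d2 /eqP ed] eI; subst d1 I.
  exact: dbar_stair_cospan.
split.
  move=> b1 d1 b2 d2 /and3P[/eqP eb b1d2 d21] eI; subst b2 I.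
  exact: dbar_stair_span.
move=> b1 d1 b2 d2 /and3P[b21 b1d2 d21] eI; subst I.
exact: dbar_stair_zigzag.
Qed.
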